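(* Let $r\in\mathbb{N}$ and let $p\in(\frac{1}{r+1},\frac1r]$ be fixed. Let $(H_n)_{n\in\mathbb{N}}$ be a sequence of weakly $q$-pseudorandom graphs on $n$ vertices with $q=q(n)\gg\log(n)/n$. Then the following hold for $H=H_n$: (i) For every $\mu\in\mathcal{M}_{1,p}(H)$, with probability $1-o(1)$ we have $|C_1(\mathbf{H}_\mu)|\geq(1-o(1))\frac{1+\sqrt{\frac{(r+1)p-1}{r}}}{r+1}\,n$. (ii) There exists $\mu\in\mathcal{M}_{1,p}(H)$ such that with probability $1-o(1)$ the random graph $\mathbf{H}_\mu$ satisfies $|C_1(\mathbf{H}_\mu)|\leq(1+o(1))\frac{1+\sqrt{\frac{(r+1)p-1}{r}}}{r+1}\,n$.
   Context: A sequence $(H_n)$ of $n$-vertex graphs is weakly $q$-pseudorandom if $\max\{|e(H_n[U])-q|U|^2/2|:\ U\subseteq V(H_n)\}=o(qn^2)$. A random graph model on $H$ is a probability measure $\mu$ on subsets of $E(H)$, and $\mathbf{H}_\mu$ is the random spanning subgraph of $H$ with edge set distributed according to $\mu$. $\mu$ is $1$-independent if for all sets $A,B\subseteq E(H)$ whose edges span disjoint vertex sets, $E(\mathbf{H}_\mu)\cap A$ and $E(\mathbf{H}_\mu)\cap B$ are independent. $\mathcal{M}_{1,p}(H)$ is the set of $1$-independent measures on $H$ in which each edge is present with probability exactly $p$. $C_1(\mathbf{H}_\mu)$ denotes a largest connected component of $\mathbf{H}_\mu$. Asymptotics are as $n\to\infty$. *)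

From HB Require Import structures.
From mathcomp Require Import all_boot all_order all_algebra.
From mathcomp Require Import reals exp.
Set Implicit Arguments. Unset Strict Implicit. Unset Printing Implicit Defensive.
Import Order.TTheory GRing.Theory Num.Theory.
Local Open Scope ring_scope.

Section Defs.
Variable R : realType.

(* A simple graph on vertex set 'I_n is given by its edge set: a set of
   2-element subsets of 'I_n. *)
Definition is_simple_graph n (E : {set {set 'I_n}}) : Prop :=
  forall e, e \in E -> #|e| = 2%N.

Definition edges_in n (E : {set {set 'I_n}}) (U : {set 'I_n}) : nat :=
  #|[set e in E | e \subset U]|.

Definition weakly_pseudorandom (H : forall n, {set {set 'I_n}}) (q : nat -> R) : Prop :=
  forall eps : R, 0 < eps -> exists N : nat, forall n : nat, (N <= n)%N ->
    forall U : {set 'I_n},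
      `| (edges_in (H n) U)%:R - q n * (#|U|%:R) ^+ 2 / 2 | <= eps * (q n * (n%:R) ^+ 2).

Definition prob n (mu : {ffun {set {set 'I_n}} -> R}) (A : pred {set {set 'I_n}}) : R :=
  \sum_(S | A S) mu S.

Definition random_graph_model n (E : {set {set 'I_n}}) (mu : {ffun {set {set 'I_n}} -> R}) : Prop :=
  [/\ forall S, 0 <= mu S, \sum_S mu S = 1 & forall S, mu S != 0 -> S \subset E].

Definition span n (A : {set {set 'I_n}}) : {set 'I_n} := \bigcup_(e in A) e.

Definition one_independent n (E : {set {set 'I_n}}) (mu : {ffun {set {set 'I_n}} -> R}) : Prop :=
  forall A B : {set {set 'I_n}}, A \subset E -> B \subset E ->
    [disjoint span A & span B] ->
    forall a b : {set {set 'I_n}},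
      prob mu (fun S => (S :&: A == a) && (S :&: B == b))
      = prob mu (fun S => S :&: A == a) * prob mu (fun S => S :&: B == b).

Definition M1p n (E : {set {set 'I_n}}) (p : R) (mu : {ffun {set {set 'I_n}} -> R}) : Prop :=
  [/\ random_graph_model E mu, one_independent E mu &
      forall e, e \in E -> prob mu (fun S => e \in S) = p].

Definition component n (S : {set {set 'I_n}}) (v : 'I_n) : {set 'I_n} :=
  [set u | connect (fun x y => [set x; y] \in S) v u].

Definition largest_component_size n (S : {set {set 'I_n}}) : nat :=
  \max_(v : 'I_n) #|component S v|.

End Defs.

From Pilot Require Import Defs.
From HB Require Import structures.
From mathcomp Require Import all_boot all_order all_algebra.
From mathcomp Require Import reals exp.
From mathcomp Require Import lra zify ring.
Import Order.TTheory GRing.Theory Num.Theory.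
Local Open Scope ring_scope.

Set Implicit Arguments. Unset Strict Implicit. Unset Printing Implicit Defensive.

(* (i) In a 1-independent model only edges sharing a vertex are correlated, so
   the number X of kept edges has variance at most 2n|E| and, by Chebyshev,
   X >= p|E| - o(qn^2) whp.  If every component had fewer than l n vertices,
   the components could be merged into at most 2r+3 blocks of at most l n
   vertices each; all kept edges lie inside blocks, so pseudorandomness gives
   X <= (q/2) sum |G|^2 + o(qn^2), and convexity caps sum |G|^2 by
   (r l^2 + (1 - r l)^2) n^2.  This is less than p n^2 whenever
   1/(r+1) < l < c, where c is the larger root of r c^2 + (1 - r c)^2 = p.
   (ii) Colour the vertices independently, r colours with probability c and
   one with probability 1 - r c, and keep the monochromatic edges.  An edge
   is kept with probability r c^2 + (1 - r c)^2 = p, edge sets on disjoint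
   vertex sets depend on disjoint sets of colours, and every component lies
   in a colour class, whose size concentrates around at most c n. *)
Lemma ler_sum_subset (R : numDomainType) (T : finType) (P Q : pred T) (F : T -> R) :
  (forall x, P x -> Q x) -> (forall x, Q x -> 0 <= F x) ->
  \sum_(x | P x) F x <= \sum_(x | Q x) F x.
Proof.
move=> PQ F0; rewrite [X in _ <= X](bigID P) /=.
rewrite (eq_bigl P) ?lerDl; first by apply: sumr_ge0 => x /andP[/F0].
by move=> x; apply/andP/idP => [[]|Px] //; split => //; apply: PQ.
Qed.

Section WeightedSums.
Variables (R : realType) (T : finType) (w : T -> R).
Hypothesis w_ge0 : forall x, 0 <= w x.

Lemma sum_weight_indicator (P : pred T) :
  \sum_x w x * (P x)%:R = \sum_(x | P x) w x.
Proof.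
by rewrite [RHS]big_mkcond; apply: eq_bigr => x _; case: (P x); rewrite ?mulr1 ?mulr0.
Qed.

Lemma sum_weight_exists_le (I : finType) (P : I -> pred T) :
  \sum_(x | [exists i, P i x]) w x <= \sum_i \sum_(x | P i x) w x.
Proof.
rewrite big_mkcond; under [X in _ <= X]eq_bigr => i _ do rewrite big_mkcond.
rewrite [X in _ <= X]exchange_big /=; apply: ler_sum => x _.
case: existsP => [[i Pix]|_]; last by apply: sumr_ge0 => i _; case: ifP.
by rewrite (bigD1 i) //= Pix lerDl; apply: sumr_ge0 => j _; case: ifP.
Qed.

Lemma chebyshev (X : T -> R) (m t : R) : 0 < t ->
  \sum_(x | t <= `|X x - m|) w x <= (\sum_x w x * (X x - m) ^+ 2) / t ^+ 2.
Proof.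
move=> t_gt0; rewrite ler_pdivlMr ?exprn_gt0 // big_distrl /=.
apply: (@le_trans _ _ (\sum_(x | t <= `|X x - m|) w x * (X x - m) ^+ 2)).
  apply: ler_sum => x tX; apply: ler_wpM2l => //.
  rewrite -[(X x - m) ^+ 2]real_normK ?num_real //.
  by apply: lerXn2r; rewrite // qualifE /= ltW.
by apply: (ler_sum_subset (Q := predT)) => // x _; rewrite mulr_ge0 ?sqr_ge0.
Qed.

Lemma mean_count (I : finType) (A : {set I}) (P : I -> pred T) :
  \sum_x w x * \sum_(i in A) (P i x)%:R = \sum_(i in A) \sum_(x | P i x) w x.
Proof.
under eq_bigr => x _ do rewrite big_distrr.
by rewrite exchange_big; apply: eq_bigr => i _; rewrite sum_weight_indicator.
Qed.

Lemma second_moment_count (I : finType) (A : {set I}) (P : I -> pred T) :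
  \sum_x w x * (\sum_(i in A) (P i x)%:R) ^+ 2
  = \sum_(i in A) \sum_(j in A) \sum_(x | P i x && P j x) w x.
Proof.
under eq_bigr => x _ do rewrite expr2 big_distrl big_distrr.
rewrite exchange_big; apply: eq_bigr => i _.
under eq_bigr => x _ do rewrite !big_distrr.
rewrite exchange_big; apply: eq_bigr => j _.
rewrite -sum_weight_indicator; apply: eq_bigr => x _.
by case: (P i x); case: (P j x); rewrite /= ?mulr1 ?mulr0 ?mul0r.
Qed.

Section Probability.
Hypothesis w_sum1 : \sum_x w x = 1.

Lemma sum_weight_compl (P : pred T) :
  \sum_(x | P x) w x = 1 - \sum_(x | ~~ P x) w x.
Proof. by rewrite -w_sum1 [X in _ = X - _](bigID P) /= addrK. Qed.

Lemma variance_expansion (X : T -> R) (m : R) : \sum_x w x * X x = m ->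
  \sum_x w x * (X x - m) ^+ 2 = \sum_x w x * X x ^+ 2 - m ^+ 2.
Proof.
move=> mean; transitivity
  (\sum_x w x * X x ^+ 2 - 2%:R * m * \sum_x w x * X x + m ^+ 2 * \sum_x w x).
  rewrite !big_distrr -sumrB -big_split /=.
  by apply: eq_bigr => x _; ring.
by rewrite mean w_sum1; ring.
Qed.

Lemma chebyshev_lower (X : T -> R) (m t V : R) : 0 < t ->
  \sum_x w x * (X x - m) ^+ 2 <= V ->
  1 - V / t ^+ 2 <= \sum_(x | `|X x - m| < t) w x.
Proof.
move=> t_gt0 varV; rewrite sum_weight_compl lerD2l lerN2.
rewrite (eq_bigl (fun x => t <= `|X x - m|)) => [|x]; last by rewrite -leNgt.
apply: le_trans (chebyshev X m t_gt0) _.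
by rewrite ler_wpM2r // invr_ge0 exprn_ge0 ?ltW.
Qed.

Lemma chebyshev_lower_forall (I : finType) (X : I -> T -> R) (m V : I -> R) (t : R) :
  0 < t -> (forall i, \sum_x w x * (X i x - m i) ^+ 2 <= V i) ->
  1 - (\sum_i V i) / t ^+ 2 <= \sum_(x | [forall i, `|X i x - m i| < t]) w x.
Proof.
move=> t_gt0 varV; rewrite sum_weight_compl lerD2l lerN2.
rewrite (eq_bigl (fun x => [exists i, t <= `|X i x - m i|])) => [|x]; last first.
  by rewrite negb_forall; apply: eq_existsb => i; rewrite -leNgt.
apply: le_trans (sum_weight_exists_le _) _; rewrite big_distrl /=.
apply: ler_sum => i _; apply: le_trans (chebyshev (X i) (m i) t_gt0) _.
by rewrite ler_wpM2r // invr_ge0 exprn_ge0 ?ltW.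
Qed.

Lemma variance_count_le (I : finType) (A : {set I}) (P : I -> pred T)
    (pi : I -> R) (D : rel I) :
  (forall i, i \in A -> \sum_(x | P i x) w x = pi i) ->
  (forall i j, i \in A -> j \in A -> ~~ D i j ->
     \sum_(x | P i x && P j x) w x = pi i * pi j) ->
  \sum_x w x * (\sum_(i in A) (P i x)%:R - \sum_(i in A) pi i) ^+ 2
  <= \sum_(i in A) \sum_(j in A) (D i j)%:R.
Proof.
move=> marginal indep.
have pi_ge0 i : i \in A -> 0 <= pi i by move/marginal <-; apply: sumr_ge0.
rewrite variance_expansion; last first.
  by rewrite mean_count; apply: eq_bigr => i /marginal.
rewrite second_moment_count expr2 big_distrl -sumrB; apply: ler_sum => i iA.
rewrite big_distrr -sumrB; apply: ler_sum => j jA /=.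
case: (boolP (D i j)) => [_|nD] /=; last by rewrite indep // subrr.
have both_le1 : \sum_(x | P i x && P j x) w x <= 1.
  by rewrite -w_sum1; apply: (ler_sum_subset (Q := predT)).
by have := mulr_ge0 (pi_ge0 i iA) (pi_ge0 j jA); lra.
Qed.

End Probability.
End WeightedSums.


Section SumOfSquares.
Variable R : realType.

Lemma sum_sqr_le_capped (I : finType) (A : {set I}) (x : I -> R) (k : nat) (T N : R) :
  (forall i, i \in A -> 0 <= x i <= T) -> \sum_(i in A) x i <= N ->
  k%:R * T <= N <= k.+1%:R * T ->
  \sum_(i in A) x i ^+ 2 <= k%:R * T ^+ 2 + (N - k%:R * T) ^+ 2.
Proof.
move=> x_range sumN /andP[kTN NkT].
set b := N - k%:R * T.
have b_ge0 : 0 <= b by rewrite subr_ge0.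
have b_leT : b <= T by move: NkT; rewrite /b -natr1 mulrDl mul1r; lra.
pose B := [set i in A | b <= x i].
have excess : \sum_(i in B) (x i - b) <= k%:R * (T - b).
  have [Bk|kB] := leqP #|B| k.
    apply: (@le_trans _ _ (\sum_(i in B) (T - b))).
      by apply: ler_sum => i; rewrite inE => /andP[/x_range/andP[_ xT] _]; lra.
    by rewrite sumr_const -[_ *+ #|B|]mulr_natl; apply: ler_wpM2r; rewrite ?subr_ge0 ?ler_nat.
  have sumB : \sum_(i in B) x i <= N.
    apply: le_trans sumN; apply: ler_sum_subset => [i|i /x_range/andP[]//].
    by rewrite inE => /andP[].
  have kb : k.+1%:R * b <= #|B|%:R * b by apply: ler_wpM2r; rewrite ?ler_nat.
  rewrite sumrB sumr_const -[_ *+ #|B|]mulr_natr; move: kb; rewrite -natr1 /b; lra.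
have pointwise i : i \in A ->
    x i ^+ 2 <= b * x i + (if b <= x i then T * (x i - b) else 0).
  move=> /x_range/andP[x_ge0 xT]; rewrite expr2.
  by case: (leP b (x i)) => bx; rewrite ?addr0; nra.
apply: (le_trans (ler_sum _ pointwise)).
rewrite big_split /= -big_distrr -big_mkcondr /=.
rewrite [X in _ + X](eq_bigl (fun i => i \in B)) => [|i]; last by rewrite inE.
rewrite -big_distrr /=.
have bsum : b * \sum_(i in A) x i <= b * N by rewrite ler_wpM2l.
have Texcess : T * \sum_(i in B) (x i - b) <= T * (k%:R * (T - b)).
  by rewrite ler_wpM2l //; apply: le_trans b_leT.
suff -> : k%:R * T ^+ 2 + b ^+ 2 = b * N + T * (k%:R * (T - b)) by apply: lerD.
by rewrite /b; ring.
Qed.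

End SumOfSquares.


Section MergeBlocks.
Variable V : finType.
Implicit Types Q : {set {set V}}.

Definition refines Q Q' := forall G, G \in Q -> exists2 G', G' \in Q' & G \subset G'.

Lemma refines_refl Q : refines Q Q.
Proof. by move=> G GQ; exists G. Qed.

Lemma refines_trans Q1 Q2 Q3 : refines Q1 Q2 -> refines Q2 Q3 -> refines Q1 Q3.
Proof.
move=> r12 r23 G /r12[G2 /r23[G3 G3Q sG2] sG]; exists G3 => //.
exact: subset_trans sG2.
Qed.

Lemma merge_pair Q A B : A \in Q -> B \in Q -> A != B ->
  let Q1 := (A :|: B) |: (Q :\ A :\ B) in
  [/\ (#|Q1| < #|Q|)%N, (\sum_(G in Q1) #|G| <= \sum_(G in Q) #|G|)%N
    & refines Q Q1].
Proof.
move=> AQ BQ AB Q1.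
have BQA : B \in Q :\ A by rewrite !inE eq_sym AB.
have cardQ : #|Q| = (#|Q :\ A :\ B|).+2.
  by rewrite (cardsD1 A Q) (cardsD1 B (Q :\ A)) AQ BQA.
split.
- by rewrite /Q1 cardsU1 cardQ; case: (_ \notin _).
- apply: (@leq_trans (#|A :|: B| + \sum_(G in Q :\ A :\ B) #|G|)).
    rewrite /Q1; case: (boolP (A :|: B \in Q :\ A :\ B)) => [inQ|notinQ].
      have /setUidPr -> : [set A :|: B] \subset Q :\ A :\ B by rewrite sub1set.
      exact: leq_addl.
    by rewrite big_setU1.
  rewrite [X in (_ <= X)%N](big_setD1 A) // (big_setD1 B) //= addnA.
  by rewrite leq_add2r cardsU leq_subr.
- move=> G GQ; case: (boolP (G \in [set A; B])) => [|notAB].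
    rewrite !inE => /orP[] /eqP ->; exists (A :|: B); rewrite ?setU11 //.
      exact: subsetUl.
    exact: subsetUr.
  move: notAB; rewrite !inE negb_or => /andP[GA GB].
  by exists G; rewrite // /Q1 !inE GA GB GQ orbT.
Qed.

Lemma card_unmergeable_blocks (R : realType) Q (T : R) :
  (forall A B, A \in Q -> B \in Q -> A != B -> T < (#|A| + #|B|)%:R) ->
  (#|Q|.-1)%:R * T <= 2%:R * (\sum_(G in Q) #|G|)%:R.
Proof.
move=> unmergeable; have [->|[A0 A0Q]] := set_0Vmem Q.
  by rewrite cards0 mul0r mulr_ge0 ?ler0n.
have [M MQ Mmin] := arg_minnP (fun A : {set V} => #|A|) A0Q.
have {}MQ : M \in Q := MQ.
have cardQ : #|Q|.-1 = #|Q :\ M| by rewrite (cardsD1 M Q) MQ.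
apply: (@le_trans _ _ (\sum_(B in Q :\ M) 2%:R * (#|B|%:R : R))).
  rewrite cardQ mulr_natl -sumr_const; apply: ler_sum => B; rewrite !inE => /andP[BM BQ].
  have := unmergeable M B MQ BQ; rewrite eq_sym BM natrD => /(_ isT).
  by have := Mmin B BQ; rewrite -(ler_nat R); lra.
rewrite -big_distrr /= ler_wpM2l ?ler0n // -natr_sum ler_nat.
by rewrite [X in (_ <= X)%N](big_setD1 M) //= leq_addl.
Qed.

Lemma merge_small_blocks (R : realType) Q (T : R) (m : nat) :
  (\sum_(G in Q) #|G| <= m)%N -> (forall G, G \in Q -> #|G|%:R <= T) ->
  exists2 Q' : {set {set V}}, refines Q Q' &
    [/\ (\sum_(G in Q') #|G| <= m)%N, (forall G, G \in Q' -> #|G|%:R <= T)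
      & (#|Q'|.-1)%:R * T <= 2%:R * m%:R].
Proof.
elim: {Q}#|Q|.+1 {-2}Q (ltnSn #|Q|) => // k IH Q Qk sumQ sizeQ.
case: (boolP [exists A in Q, exists B in Q, (A != B) && ((#|A| + #|B|)%:R <= T)]).
  case/existsP => A /andP[AQ /existsP[B /andP[BQ /andP[AB ABT]]]].
  have [Q1_lt sumQ1 refQ1] := merge_pair AQ BQ AB.
  have [|||Q' refQ' spec] := IH ((A :|: B) |: (Q :\ A :\ B)).
  - exact: leq_trans Q1_lt Qk.
  - exact: leq_trans sumQ1 sumQ.
  - move=> G; rewrite !inE => /orP[/eqP ->|/andP[_ /andP[_ /sizeQ]]] //.
    by apply: le_trans ABT; rewrite ler_nat cardsU leq_subr.
  by exists Q' => //; exact: refines_trans refQ1 refQ'.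
rewrite negb_exists_in => /forallP unmergeable.
exists Q; first exact: refines_refl.
split => //; apply: le_trans (card_unmergeable_blocks _) _.
  move=> A B AQ BQ AB; rewrite ltNge; apply/negP => ABT.
  by move: (unmergeable A); rewrite AQ negb_exists_in => /forallP/(_ B); rewrite BQ AB ABT.
by rewrite ler_wpM2l ?ler0n ?ler_nat.
Qed.

End MergeBlocks.


Section Components.
Variables (n : nat) (S : {set {set 'I_n}}).

Definition adjacent : rel 'I_n := fun x y => [set x; y] \in S.

Lemma adjacent_sym : symmetric adjacent.
Proof. by move=> x y; rewrite /adjacent setUC. Qed.

Lemma component_eq x y : y \in component S x -> component S y = component S x.
Proof.
rewrite inE => cxy; apply/setP => z; rewrite !inE.
apply/idP/idP => [|cxz]; first exact: connect_trans cxy.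
by apply: connect_trans cxz; rewrite (sym_connect_sym adjacent_sym).
Qed.

Definition components : {set {set 'I_n}} := [set component S v | v : 'I_n].

Lemma sum_card_components : (\sum_(G in components) #|G| <= n)%N.
Proof.
have /eqP -> : trivIset components.
  apply/trivIsetP => _ _ /imsetP[x _ ->] /imsetP[y _ ->] neq.
  apply/pred0P => z /=; apply/negbTE/negP => /andP[zx zy].
  by move/eqP: neq; apply; rewrite -(component_eq zx) (component_eq zy).
by rewrite -[X in (_ <= X)%N](card_ord n) max_card.
Qed.

Lemma card_component_le v : (#|component S v| <= largest_component_size S)%N.
Proof. exact: (leq_bigmax v). Qed.

Lemma edge_sub_component x y : [set x; y] \in S -> [set x; y] \subset component S x.
Proof.
move=> xyS; apply/subsetP => z; rewrite !inE => /orP[] /eqP ->; first exact: connect0.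
exact: connect1.
Qed.

Lemma card_kept_edges_le (E Q : {set {set 'I_n}}) :
  is_simple_graph E -> refines components Q ->
  (#|E :&: S| <= \sum_(G in Q) edges_in E G)%N.
Proof.
move=> simpleE refQ; rewrite -sum1_card /edges_in.
under [X in (_ <= X)%N]eq_bigr => G _ do rewrite -sum1_card.
rewrite (exchange_big_dep (mem E)) => [|G e _]; last by rewrite inE => /andP[].
rewrite (eq_bigl (fun e => (e \in E) && (e \in S))) => [|e]; last by rewrite inE.
rewrite big_mkcondr; apply: leq_sum => e eE; case: ifP => // eS.
have /eqP/cards2P[x [y [_ exy]]] := simpleE e eE.
have [|G GQ sG] := refQ (component S x); first exact: imset_f.
rewrite (bigD1 G) /=; first exact: leq_addr.
by rewrite GQ inE eE exy (subset_trans (edge_sub_component _) sG) // -exy.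
Qed.

End Components.

Section SmallComponentsFewEdges.
Variable R : realType.

Definition collision_prob (r : nat) (l : R) : R := r%:R * l ^+ 2 + (1 - r%:R * l) ^+ 2.

Lemma collision_prob_ge0 (r : nat) (l : R) : 0 <= collision_prob r l.
Proof. by apply: addr_ge0; [apply: mulr_ge0|]; rewrite ?ler0n ?sqr_ge0. Qed.

Lemma kept_edges_le_of_small_components n (E S : {set {set 'I_n}}) (q eps l : R) (r : nat) :
  is_simple_graph E -> 0 <= q -> 0 <= eps -> r%:R * l <= 1 -> 1 < r.+1%:R * l ->
  (forall U : {set 'I_n},
     `|(edges_in E U)%:R - q * (#|U|%:R) ^+ 2 / 2| <= eps * (q * (n%:R) ^+ 2)) ->
  (largest_component_size S)%:R < l * n%:R ->
  (#|E :&: S|)%:R <= q * n%:R ^+ 2 / 2 * collision_prob r l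
                     + (2 * r%:R + 3) * (eps * (q * n%:R ^+ 2)).
Proof.
move=> simpleE q_ge0 eps_ge0 rl_le1 rl_gt1 pseudo small.
have l_gt0 : 0 < l by move: rl_gt1; rewrite -natr1 mulrDl mul1r; nra.
have n_gt0 : 0 < n%:R :> R.
  by have := ler0n R (largest_component_size S); nra.
have sizeC G : G \in components S -> #|G|%:R <= l * n%:R.
  case/imsetP=> v _ ->; apply: ltW (le_lt_trans _ small).
  by rewrite ler_nat card_component_le.
have [Q refQ [sumQ sizeQ cardQ]] := merge_small_blocks (sum_card_components S) sizeC.
have cardQ_le : #|Q|%:R <= 2 * r%:R + 3 :> R.
  have : (#|Q|.-1)%:R * l <= 2 by move: cardQ; rewrite mulrA ler_pM2r.
  have : (#|Q| <= (#|Q|.-1).+1)%N by rewrite leqSpred.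
  rewrite -(ler_nat R) -natr1; move: rl_gt1; rewrite -natr1.
  have := ler0n R (#|Q|.-1); nra.
have sqQ : \sum_(G in Q) (#|G|%:R : R) ^+ 2
    <= r%:R * (l * n%:R) ^+ 2 + (n%:R - r%:R * (l * n%:R)) ^+ 2.
  apply: sum_sqr_le_capped => [G GQ||]; first by rewrite ler0n sizeQ.
    by rewrite -natr_sum ler_nat.
  by apply/andP; split; nra.
apply: le_trans (_ : (\sum_(G in Q) edges_in E G)%:R <= _).
  by rewrite ler_nat card_kept_edges_le.
apply: (@le_trans _ _ (\sum_(G in Q) (q * (#|G|%:R) ^+ 2 / 2 + eps * (q * n%:R ^+ 2)))).
  by rewrite natr_sum; apply: ler_sum => G _; have /ler_normlP[_] := pseudo G; lra.
rewrite big_split /= sumr_const -[_ *+ #|Q|]mulr_natl.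
have -> : \sum_(G in Q) q * (#|G|%:R) ^+ 2 / 2 = q / 2 * \sum_(G in Q) (#|G|%:R) ^+ 2.
  by rewrite big_distrr; apply: eq_bigr => G _; rewrite mulrAC.
apply: lerD; last by apply: ler_wpM2r; rewrite ?mulr_ge0 ?sqr_ge0.
suff -> : q * n%:R ^+ 2 / 2 * collision_prob r l
        = q / 2 * (r%:R * (l * n%:R) ^+ 2 + (n%:R - r%:R * (l * n%:R)) ^+ 2).
  by apply: ler_wpM2l; rewrite ?divr_ge0.
by rewrite /collision_prob; ring.
Qed.

End SmallComponentsFewEdges.


Lemma card_sep_sum (T : finType) (A : {set T}) (P : pred T) :
  #|[set x in A | P x]| = (\sum_(x in A) P x)%N.
Proof.
rewrite -sum1_card big_mkcond [RHS]big_mkcond /=; apply: eq_bigr => x _.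
by rewrite inE; case: (x \in A); case: (P x).
Qed.

Section KeptEdges.
Variables (R : realType) (n : nat).
Implicit Types (E S : {set {set 'I_n}}) (mu : {ffun {set {set 'I_n}} -> R}).

Lemma setI_set1_eq S e : (S :&: [set e] == [set e]) = (e \in S).
Proof. by rewrite -sub1set; apply/eqP/setIidPr. Qed.

Lemma span_set1 (e : {set 'I_n}) : Defs.span [set e] = e.
Proof. exact: big_set1. Qed.

Lemma one_independent_disjoint_edges E mu e f :
  one_independent E mu -> e \in E -> f \in E -> [disjoint e & f] ->
  prob mu (fun S => (e \in S) && (f \in S))
  = prob mu (fun S => e \in S) * prob mu (fun S => f \in S).
Proof.
move=> indep eE fE ef.
have := indep [set e] [set f]; rewrite !sub1set !span_set1.
move=> /(_ eE fE ef [set e] [set f]); rewrite /prob.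
rewrite (eq_bigl _ _ (fun S => congr2 andb (setI_set1_eq S e) (setI_set1_eq S f))).
by rewrite !(eq_bigl _ _ (setI_set1_eq^~ _)).
Qed.

Lemma card_edges_meeting_le E e : is_simple_graph E -> e \in E ->
  (#|[set f in E | ~~ [disjoint e & f]]| <= 2 * n)%N.
Proof.
move=> simpleE eE; have /eqP/cards2P[x [y [_ ->]]] := simpleE e eE.
pose star z := [set [set z; u] | u : 'I_n].
apply: (@leq_trans #|star x :|: star y|); last first.
  apply: leq_trans (leq_card_setU _ _) _.
  by rewrite mul2n -addnn leq_add // (leq_trans (leq_imset_card _ _)) // card_ord.
apply: subset_leq_card; apply/subsetP => f; rewrite !inE => /andP[fE].
have /eqP/cards2P[a [b [_ ->]]] := simpleE f fE.
case/pred0Pn => z /=; rewrite !inE => /andP[/orP[] /eqP -> /orP[] /eqP ->].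
- by apply/orP; left; apply/imsetP; exists b.
- by apply/orP; left; apply/imsetP; exists a; rewrite // setUC.
- by apply/orP; right; apply/imsetP; exists b.
- by apply/orP; right; apply/imsetP; exists a; rewrite // setUC.
Qed.

Lemma card_setI_sum E S : (#|E :&: S|)%:R = \sum_(e in E) ((e \in S)%:R : R).
Proof.
have -> : E :&: S = [set e in E | e \in S] by apply/setP => e; rewrite !inE.
by rewrite card_sep_sum natr_sum.
Qed.

Lemma variance_kept_edges_le E p mu : is_simple_graph E -> M1p E p mu ->
  \sum_S mu S * ((#|E :&: S|)%:R - p * #|E|%:R) ^+ 2 <= 2 * n%:R * #|E|%:R.
Proof.
move=> simpleE [[mu_ge0 mu_sum1 _] indep marginal].
under eq_bigr => S _ do rewrite card_setI_sum (mulr_natr p) -sumr_const.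
apply: le_trans (variance_count_le (P := fun e S => e \in S) (pi := fun=> p)
  (D := fun e f => ~~ [disjoint e & f]) mu_ge0 mu_sum1 marginal _) _.
  move=> e f eE fE; rewrite negbK => ef.
  rewrite -{1}(marginal e eE) -(marginal f fE).
  exact: (one_independent_disjoint_edges indep eE fE ef).
apply: (@le_trans _ _ (\sum_(e in E) 2 * n%:R)).
  apply: ler_sum => e eE; rewrite -natr_sum -natrM ler_nat -card_sep_sum.
  exact: card_edges_meeting_le.
by rewrite sumr_const -[_ *+ #|E|]mulr_natr.
Qed.

End KeptEdges.


Section GiantFraction.
Variables (R : realType) (r : nat) (p : R).
Hypotheses (r_gt0 : (0 < r)%N) (p_gt : 1 / r.+1%:R < p) (p_le : p <= 1 / r%:R).

Definition giant_fraction : R := (1 + Num.sqrt ((r.+1%:R * p - 1) / r%:R)) / r.+1%:R.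

Lemma giant_fraction_spec :
  [/\ 1 < r.+1%:R * giant_fraction, r%:R * giant_fraction <= 1
    & collision_prob r giant_fraction = p].
Proof.
have r_pos : 0 < r%:R :> R by rewrite ltr0n.
have r1_pos : 0 < r.+1%:R :> R by rewrite ltr0n.
have r1E : r.+1%:R = r%:R + 1 :> R by rewrite -natr1.
have rp1 : 1 < r.+1%:R * p by move: p_gt; rewrite ltr_pdivrMr // mulrC.
have rp : r%:R * p <= 1 by move: p_le; rewrite ler_pdivlMr // mulrC.
have cE : r.+1%:R * giant_fraction = 1 + Num.sqrt ((r.+1%:R * p - 1) / r%:R).
  by rewrite /giant_fraction mulrCA divff ?mulr1 ?gt_eqF.
move: cE; set y := (r.+1%:R * p - 1) / r%:R; set s := Num.sqrt y => cE.
have ry : r%:R * y = r.+1%:R * p - 1 by rewrite /y mulrCA divff ?mulr1 // gt_eqF.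
have s_ge0 : 0 <= s by apply: sqrtr_ge0.
have s2 : s ^+ 2 = y by rewrite sqr_sqrtr // ltW // divr_gt0 // subr_gt0.
have rs : r%:R * s <= 1.
  have rs2 : (r%:R * s) ^+ 2 <= 1 by rewrite exprMn s2 expr2 -mulrA ry r1E; nra.
  have : 0 <= r%:R * s by rewrite mulr_ge0 ?ler0n.
  nra.
split.
- have : 0 < s by rewrite sqrtr_gt0 divr_gt0 // subr_gt0.
  by rewrite cE; lra.
- rewrite -(ler_pM2l r1_pos) mulrCA cE mulr1; nra.
- apply: (mulfI (_ : r.+1%:R ^+ 2 != 0)); first by rewrite expf_neq0 // gt_eqF.
  transitivity (r%:R * (r.+1%:R * giant_fraction) ^+ 2
                + (r.+1%:R - r%:R * (r.+1%:R * giant_fraction)) ^+ 2).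
    by rewrite /collision_prob; ring.
  rewrite cE r1E; rewrite r1E in ry; rewrite -[X in _ = X * _]mulr1.
  by have : s ^+ 2 = y := s2; nra.
Qed.

End GiantFraction.

Section SubcriticalFraction.
Variable R : realType.

Lemma collision_prob_lt (r : nat) (l c : R) : (0 < r)%N ->
  1 < r.+1%:R * l -> l < c -> collision_prob r l < collision_prob r c.
Proof.
move=> r_gt0 rl lc; rewrite -subr_gt0.
have -> : collision_prob r c - collision_prob r l
          = r%:R * (c - l) * (r.+1%:R * (c + l) - 2%:R).
  by rewrite /collision_prob -natr1; ring.
rewrite !mulr_gt0 ?ltr0n ?subr_gt0 //.
have : 0 < r.+1%:R * (c - l) by rewrite mulr_gt0 ?ltr0n ?subr_gt0.
lra.
Qed.

Lemma subcritical_fraction_exists (r : nat) (p eps : R) :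
  (0 < r)%N -> 1 / r.+1%:R < p -> p <= 1 / r%:R -> 0 < eps ->
  exists l : R, [/\ (1 - eps) * giant_fraction r p <= l, 1 < r.+1%:R * l,
                    r%:R * l <= 1 & collision_prob r l < p].
Proof.
move=> r_gt0 p_gt p_le eps_gt0.
have [rc_gt1 rc_le1 c_root] := giant_fraction_spec r_gt0 p_gt p_le.
set c := giant_fraction r p in rc_gt1 rc_le1 c_root *.
have r1_pos : 0 < r.+1%:R :> R by rewrite ltr0n.
have c_gt0 : 0 < c by rewrite -(pmulr_rgt0 _ r1_pos) (lt_trans ltr01).
have ec_lt : (1 - eps) * c < c by have := mulr_gt0 eps_gt0 c_gt0; lra.
have k_lt : 1 / r.+1%:R < c by rewrite ltr_pdivrMr // mulrC.
pose m := (c + 1 / r.+1%:R) / 2.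
have rm_gt1 : 1 < r.+1%:R * m.
  by rewrite /m mulrA mulrDr mul1r mulfV ?gt_eqF //; lra.
have m_lt : m < c by move: k_lt; rewrite /m; set k := 1 / r.+1%:R; lra.
have rl_gt1 : 1 < r.+1%:R * Num.max ((1 - eps) * c) m.
  apply: lt_le_trans rm_gt1 _; apply: ler_wpM2l; first exact: ltW.
  by rewrite le_max lexx orbT.
exists (Num.max ((1 - eps) * c) m); rewrite le_max lexx; split => //.
  apply: le_trans rc_le1; apply: ler_wpM2l; first exact: ler0n.
  by rewrite ge_max !ltW.
by rewrite -c_root collision_prob_lt // gt_max m_lt ec_lt.
Qed.

Lemma subcritical_gap_fraction (r : nat) (p l : R) :
  p <= 1 -> collision_prob r l < p ->
  exists2 eps : R, 0 < eps <= 1 / 2 & 2 * (2 * r%:R + 5) * eps <= p - collision_prob r l.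
Proof.
move=> p_le1 subcrit; pose K : R := 2 * (2 * r%:R + 5).
have K_ge2 : 2 <= K by rewrite /K; have := ler0n R r; lra.
have K_gt0 : 0 < K := lt_le_trans (ltr0Sn R 1) K_ge2.
exists ((p - collision_prob r l) / K); last by rewrite mulrC divfK ?gt_eqF.
rewrite divr_gt0 ?subr_gt0 //= ler_pdivrMr // mul1r.
by have := collision_prob_ge0 r l; lra.
Qed.

End SubcriticalFraction.


Lemma edges_in_setT n (E : {set {set 'I_n}}) : edges_in E setT = #|E|.
Proof. by apply: eq_card => e; rewrite !inE subsetT andbT. Qed.

Section GiantComponentLowerBound.
Variable R : realType.

Lemma kept_edges_concentrate n (E : {set {set 'I_n}}) (p t : R) mu :
  is_simple_graph E -> M1p E p mu -> 0 < t ->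
  1 - 2 * n%:R * #|E|%:R / t ^+ 2
  <= prob mu (fun S => `|(#|E :&: S|)%:R - p * #|E|%:R| < t).
Proof.
move=> simpleE muE t_gt0; have [[mu_ge0 mu_sum1 _] _ _] := muE.
apply: (chebyshev_lower mu_ge0 mu_sum1 (X := fun S => (#|E :&: S|)%:R) t_gt0).
exact: variance_kept_edges_le.
Qed.

Lemma large_component_of_many_kept_edges n (E S : {set {set 'I_n}}) (q eps l p : R) (r : nat) :
  is_simple_graph E -> 0 <= q -> 0 <= eps -> 0 <= p <= 1 ->
  r%:R * l <= 1 -> 1 < r.+1%:R * l ->
  (forall U : {set 'I_n},
     `|(edges_in E U)%:R - q * (#|U|%:R) ^+ 2 / 2| <= eps * (q * (n%:R) ^+ 2)) ->
  2 * (2 * r%:R + 5) * eps <= p - collision_prob r l ->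
  p * #|E|%:R - eps * (q * n%:R ^+ 2) < (#|E :&: S|)%:R ->
  l * n%:R <= (largest_component_size S)%:R.
Proof.
move=> simpleE q_ge0 eps_ge0 /andP[p_ge0 p_le1] rl_le1 rl_gt1 pseudo gap many.
rewrite leNgt; apply/negP => small.
have few := kept_edges_le_of_small_components simpleE q_ge0 eps_ge0 rl_le1 rl_gt1 pseudo small.
have /ler_normlP[E_ge _] := pseudo setT.
rewrite edges_in_setT cardsT card_ord in E_ge.
set Z := q * n%:R ^+ 2 in few many E_ge.
have Z_ge0 : 0 <= Z by rewrite mulr_ge0 ?sqr_ge0.
have pE : p * (Z / 2 - eps * Z) <= p * #|E|%:R by rewrite ler_wpM2l //; lra.
have peps : p * (eps * Z) <= eps * Z by rewrite ler_piMl ?mulr_ge0.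
have gapZ := ler_wpM2l Z_ge0 gap.
move: few gapZ; lra.
Qed.

Lemma log_growth_eventually_ge (f : nat -> R) :
  (forall M : R, exists N : nat, forall n, (N <= n)%N -> M * ln n%:R <= f n) ->
  forall B : R, exists N : nat, forall n, (N <= n)%N -> B <= f n.
Proof.
move=> growth B.
have ln2_gt0 : 0 < ln (2%:R : R) by rewrite ln_gt0 // ltr1n.
have [N HN] := growth (`|B| / ln 2%:R).
exists (maxn N 2) => n; rewrite geq_max => /andP[Nn n2].
apply: le_trans (HN n Nn); apply: le_trans (ler_norm B) _.
apply: le_trans (_ : `|B| / ln 2%:R * ln 2%:R <= _); first by rewrite divfK ?gt_eqF // lexx.
apply: ler_wpM2l; first by rewrite divr_ge0 ?normr_ge0 ?ltW.
by rewrite ler_ln ?posrE ?ltr0n ?ler_nat // (leq_trans _ n2).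
Qed.

Lemma kept_edges_close_whp n (E : {set {set 'I_n}}) (p q eps delta : R) mu :
  is_simple_graph E -> M1p E p mu -> 0 < eps -> 0 < delta ->
  #|E|%:R <= q * n%:R ^+ 2 -> 2 / (eps ^+ 2 * delta) <= q * n%:R ->
  1 - delta <= prob mu (fun S => `|(#|E :&: S|)%:R - p * #|E|%:R| < eps * (q * n%:R ^+ 2)).
Proof.
move=> simpleE muE eps_gt0 delta_gt0 E_le qn_ge.
have qn_gt0 : 0 < q * n%:R.
  by apply: (lt_le_trans _ qn_ge); rewrite divr_gt0 ?mulr_gt0 ?exprn_gt0 ?ltr0n.
have n_gt0 : 0 < n%:R :> R.
  by rewrite ltr0n lt0n; apply/eqP => n0; move: qn_gt0; rewrite n0 mulr0 ltxx.
have q_gt0 : 0 < q by rewrite -(pmulr_lgt0 _ n_gt0).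
have t_gt0 : 0 < eps * (q * n%:R ^+ 2) by rewrite !mulr_gt0 ?exprn_gt0.
apply: le_trans (kept_edges_concentrate simpleE muE t_gt0); rewrite lerD2l lerN2.
rewrite ler_pdivrMr ?exprn_gt0 //.
have -> : delta * (eps * (q * n%:R ^+ 2)) ^+ 2
          = (eps ^+ 2 * delta * (q * n%:R)) * (q * n%:R ^+ 3) by ring.
apply: le_trans (_ : 2 * (q * n%:R ^+ 3) <= _).
  have -> : 2 * (q * n%:R ^+ 3) = 2 * n%:R * (q * n%:R ^+ 2) by ring.
  by rewrite ler_wpM2l ?mulr_ge0 ?ler0n.
apply: ler_wpM2r; first by rewrite mulr_ge0 ?exprn_ge0 ?ltW.
by rewrite -ler_pdivrMl ?mulr_gt0 ?exprn_gt0 // mulrC.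
Qed.

End GiantComponentLowerBound.


Lemma giant_component_lower_whp (R : realType) (r : nat) (p : R)
    (H : forall n : nat, {set {set 'I_n}}) (q : nat -> R) :
  (0 < r)%N -> 1 / r.+1%:R < p -> p <= 1 / r%:R ->
  (forall n, is_simple_graph (H n)) -> weakly_pseudorandom H q ->
  (forall M : R, exists N : nat, forall n, (N <= n)%N -> M * ln n%:R <= q n * n%:R) ->
  forall eps delta : R, 0 < eps -> 0 < delta ->
  exists N : nat, forall n, (N <= n)%N ->
    forall mu, M1p (H n) p mu ->
      1 - delta <= prob mu (fun S =>
        (1 - eps) * giant_fraction r p * n%:R <= (largest_component_size S)%:R).
Proof.
move=> r_gt0 p_gt p_le simpleH pseudoH growth eps delta eps_gt0 delta_gt0.
have p_gt0 : 0 < p by apply: lt_trans p_gt; rewrite divr_gt0 ?ltr0n.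
have p_le1 : p <= 1 by apply: le_trans p_le _; rewrite ler_pdivrMr ?ltr0n // mul1r ler1n.
have [l [lc rl_gt1 rl_le1 subcrit]] := subcritical_fraction_exists r_gt0 p_gt p_le eps_gt0.
have [eps1 /andP[eps1_gt0 eps1_le] eps1_gap] := subcritical_gap_fraction p_le1 subcrit.
have [N1 closeN1] := pseudoH eps1 eps1_gt0.
have [N2 growN2] := log_growth_eventually_ge growth (2 / (eps1 ^+ 2 * delta)).
exists (maxn N1 N2) => n; rewrite geq_max => /andP[nN1 nN2] mu muH.
have pseudo := closeN1 n nN1.
have B_gt0 : 0 < 2 / (eps1 ^+ 2 * delta).
  by apply: divr_gt0; [exact: ltr0Sn | exact: mulr_gt0 (exprn_gt0 _ eps1_gt0) delta_gt0].
have qn_ge := growN2 n nN2.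
have q_ge0 : 0 <= q n.
  by have := lt_le_trans B_gt0 qn_ge; have := ler0n R n; nra.
have E_le : #|H n|%:R <= q n * n%:R ^+ 2.
  have /ler_normlP[_] := pseudo setT; rewrite edges_in_setT cardsT card_ord.
  by have := mulr_ge0 q_ge0 (sqr_ge0 (n%:R : R)); nra.
apply: le_trans (kept_edges_close_whp (simpleH n) muH eps1_gt0 delta_gt0 E_le qn_ge) _.
apply: ler_sum_subset => [S|S _]; last by case: muH => [[]].
rewrite ltr_distl => /andP[many _].
apply: le_trans (_ : l * n%:R <= _); first by rewrite ler_wpM2r ?ler0n.
apply: (large_component_of_many_kept_edges (simpleH n) q_ge0 (ltW eps1_gt0) _
          rl_le1 rl_gt1 pseudo eps1_gap many).
by rewrite (ltW p_gt0) p_le1.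
Qed.


Section RandomColouring.
Variables (R : realType) (K : finType) (w : K -> R) (n : nat).
Hypotheses (w_ge0 : forall k, 0 <= w k) (w_sum1 : \sum_k w k = 1).

Local Notation colouring := {ffun 'I_n -> K}.

Definition colouring_weight (f : colouring) : R := \prod_v w (f v).

Lemma colouring_weight_ge0 f : 0 <= colouring_weight f.
Proof. by apply: prodr_ge0 => v _. Qed.

Lemma sum_colouring_weight_prod (g : 'I_n -> K -> R) :
  \sum_f colouring_weight f * \prod_v g v (f v) = \prod_v \sum_k w k * g v k.
Proof.
by rewrite bigA_distr_bigA /=; apply: eq_bigr => f _; rewrite -big_split.
Qed.

Lemma sum_colouring_weight_prod_local (D : {set 'I_n}) (g : 'I_n -> K -> R) :
  \sum_f colouring_weight f * \prod_(v in D) g v (f v) = \prod_(v in D) \sum_k w k * g v k.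
Proof.
transitivity (\sum_f colouring_weight f * \prod_v (if v \in D then g v (f v) else 1)).
  by apply: eq_bigr => f _; rewrite big_mkcond.
apply: eq_trans (sum_colouring_weight_prod (fun v k => if v \in D then g v k else 1)) _.
rewrite [RHS]big_mkcond; apply: eq_bigr => v _ /=; case: (v \in D) => //.
by under eq_bigr do rewrite mulr1.
Qed.

Lemma sum_colouring_weight : \sum_f colouring_weight f = 1.
Proof.
have := sum_colouring_weight_prod_local set0 (fun _ _ => 1).
rewrite !big_set0 => <-.
by apply: eq_bigr => f _; rewrite mulr1.
Qed.

Lemma colour_marginal x i : \sum_(f : colouring | f x == i) colouring_weight f = w i.
Proof.
rewrite -sum_weight_indicator.
transitivity (\sum_f colouring_weight f * \prod_(v in [set x]) ((f v == i)%:R : R)).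
  by apply: eq_bigr => f _; rewrite big_set1.
apply: eq_trans (sum_colouring_weight_prod_local [set x] (fun _ k => (k == i)%:R)) _.
by rewrite big_set1 sum_weight_indicator big_pred1_eq.
Qed.

Lemma colour_marginal2 x y i j : x != y ->
  \sum_(f : colouring | (f x == i) && (f y == j)) colouring_weight f = w i * w j.
Proof.
move=> xy; rewrite -sum_weight_indicator.
pose g v k : R := (k == if v == x then i else j)%:R.
have yx : (y == x) = false by rewrite eq_sym (negbTE xy).
transitivity (\sum_f colouring_weight f * \prod_(v in [set x; y]) g v (f v)).
  apply: eq_bigr => f _; rewrite big_setU1 ?inE ?xy //= big_set1 /g eqxx yx.
  by rewrite -natrM mulnb.
apply: eq_trans (sum_colouring_weight_prod_local _ g) _.
rewrite big_setU1 ?inE ?xy //= big_set1 /g eqxx yx.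
by rewrite !sum_weight_indicator !big_pred1_eq.
Qed.

Lemma colour_collision x y : x != y ->
  \sum_(f : colouring | f x == f y) colouring_weight f = \sum_k w k ^+ 2.
Proof.
move=> xy; rewrite (partition_big (fun f : colouring => f x) predT) //=.
apply: eq_bigr => k _; rewrite expr2 -(colour_marginal2 _ _ xy).
apply: eq_bigl => f; case: (eqVneq (f x) k) => [->|_]; rewrite ?andbF //.
by rewrite andbT eq_sym.
Qed.

Lemma colour_class_variance k :
  \sum_f colouring_weight f * ((#|[set v | f v == k]|)%:R - n%:R * w k) ^+ 2 <= n%:R.
Proof.
have classE f : (#|[set v | f v == k]|)%:R = \sum_(v in [set: 'I_n]) ((f v == k)%:R : R).
  by rewrite -natr_sum -card_sep_sum; apply/congr1/eq_card => v; rewrite !inE.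
have meanE : n%:R * w k = \sum_(v in [set: 'I_n]) w k.
  by rewrite sumr_const cardsT card_ord mulr_natl.
under eq_bigr => f _ do rewrite classE meanE.
apply: le_trans (variance_count_le (P := fun v f => f v == k) (pi := fun=> w k) (D := fun u v : 'I_n => u == v)
                   colouring_weight_ge0 sum_colouring_weight _ _) _.
- by move=> v _; exact: colour_marginal.
- by move=> u v _ _ uv; exact: colour_marginal2.
rewrite -[n in n%:R](card_ord n) -cardsT -sumr_const; apply: ler_sum => u _.
by rewrite (bigD1 u) ?in_setT //= eqxx big1 ?addr0 // => v /andP[_ /negbTE]; rewrite eq_sym => ->.
Qed.

Lemma colouring_independent (D : {set 'I_n}) (P Q : pred colouring) :
  (forall f g : colouring, {in D, f =1 g} -> P f = P g) ->
  (forall f g : colouring, {in ~: D, f =1 g} -> Q f = Q g) ->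
  \sum_(f | P f && Q f) colouring_weight f
  = (\sum_(f | P f) colouring_weight f) * \sum_(f | Q f) colouring_weight f.
Proof.
move=> P_local Q_local.
pose mix (f g : colouring) : colouring := [ffun v => if v \in D then f v else g v].
pose swap fg := (mix fg.1 fg.2, mix fg.2 fg.1).
have swapK : involutive swap.
  by move=> [f g]; congr pair; apply/ffunP => v; rewrite !ffunE; case: (v \in D).
have weight_mix f g :
    colouring_weight (mix f g) * colouring_weight (mix g f) = colouring_weight f * colouring_weight g.
  rewrite /colouring_weight -!big_split; apply: eq_bigr => v _ /=; rewrite !ffunE.
  by case: (v \in D); rewrite // mulrC.
rewrite -!(sum_weight_indicator colouring_weight) big_distrl /=.
under [RHS]eq_bigr do rewrite big_distrr /=.
rewrite pair_bigA /= (reindex_inj (inv_inj swapK)) /=.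
transitivity (\sum_(fg : colouring * colouring)
                colouring_weight fg.1 * (P fg.1 && Q fg.1)%:R * colouring_weight fg.2).
  rewrite -(pair_bigA _ (fun f g => colouring_weight f * (P f && Q f)%:R * colouring_weight g)) /=.
  by apply: eq_bigr => f _; rewrite -big_distrr /= sum_colouring_weight mulr1.
apply: eq_bigr => [[f g]] _ /=.
have -> : P (mix f g) = P f by apply: P_local => v vD; rewrite ffunE vD.
have -> : Q (mix g f) = Q f.
  by apply: Q_local => v; rewrite inE ffunE => /negbTE->.
rewrite -mulnb natrM; move: (weight_mix f g).
move: (colouring_weight (mix f g)) (colouring_weight (mix g f)) => a b ab.
by rewrite mulrACA ab; ring.
Qed.

End RandomColouring.


Section ColouringModel.
Variables (R : realType) (K : finType) (w : K -> R) (n : nat).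
Hypotheses (w_ge0 : forall k, 0 <= w k) (w_sum1 : \sum_k w k = 1).

Local Notation colouring := {ffun 'I_n -> K}.
Local Notation W := (@colouring_weight R K w n).
Implicit Types (E S A : {set {set 'I_n}}) (f : colouring).

Definition monochromatic_edges E f : {set {set 'I_n}} :=
  [set e in E | [forall x in e, forall y in e, f x == f y]].

Definition colouring_measure E : {ffun {set {set 'I_n}} -> R} :=
  [ffun S => \sum_(f | monochromatic_edges E f == S) W f].

Lemma prob_colouring_measure E (P : pred {set {set 'I_n}}) :
  prob (colouring_measure E) P = \sum_(f | P (monochromatic_edges E f)) W f.
Proof.
rewrite [RHS](partition_big (monochromatic_edges E) P) //=.
apply: eq_bigr => S PS; rewrite ffunE; apply: eq_bigl => f.
by case: eqP => [->|]; rewrite ?PS ?andbF.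
Qed.

Lemma monochromatic_pair f x y :
  [forall a in [set x; y], forall b in [set x; y], f a == f b] = (f x == f y).
Proof.
apply/idP/idP => [/forallP/(_ x)|fxy].
  by rewrite !inE eqxx => /forallP/(_ y); rewrite !inE eqxx orbT.
apply/forallP => a; apply/implyP; rewrite !inE => /orP[] /eqP ->;
  apply/forallP => b; apply/implyP; rewrite !inE => /orP[] /eqP -> //.
by rewrite eq_sym.
Qed.

Lemma monochromatic_edgesI E (f g : colouring) A :
  {in Defs.span A, f =1 g} -> monochromatic_edges E f :&: A = monochromatic_edges E g :&: A.
Proof.
move=> fg; apply/setP => e; rewrite !inE; case eA: (e \in A); rewrite ?andbF ?andbT //.
have eA_sub : {subset e <= Defs.span A}.
  by move=> x xe; apply/bigcupP; exists e.
congr (_ && _); apply: eq_forallb_in => x xe; apply: eq_forallb_in => y ye.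
by rewrite !fg ?eA_sub.
Qed.

Lemma colouring_measure_M1p E : is_simple_graph E ->
  M1p E (\sum_k w k ^+ 2) (colouring_measure E).
Proof.
move=> simpleE; split; first split.
- by move=> S; rewrite ffunE; apply: sumr_ge0 => f _; apply: colouring_weight_ge0.
- have := prob_colouring_measure E predT; rewrite /prob => ->.
  exact: sum_colouring_weight.
- move=> S; rewrite ffunE; case: (pickP (fun f => monochromatic_edges E f == S)) => [f /eqP <-|none].
    by move=> _; apply/subsetP => e; rewrite inE => /andP[].
  by rewrite big_pred0 ?eqxx.
- move=> A B _ _ AB a b; rewrite !prob_colouring_measure.
  apply: (colouring_independent w_sum1 (D := Defs.span A)) => f g fg.
    by rewrite (monochromatic_edgesI _ fg).
  rewrite (monochromatic_edgesI _ (f := f) (g := g)) // => v vB; apply: fg.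
  by rewrite inE (disjointFl AB vB).
- move=> e eE; rewrite prob_colouring_measure.
  have /eqP/cards2P[x [y [xy exy]]] := simpleE e eE.
  rewrite -(colour_collision w_sum1 xy); apply: eq_bigl => f.
  by rewrite inE eE exy monochromatic_pair.
Qed.

End ColouringModel.


Lemma component_sub_colour_class (K : finType) n (E : {set {set 'I_n}}) (f : {ffun 'I_n -> K}) v :
  component (monochromatic_edges E f) v \subset [set u | f u == f v].
Proof.
apply/subsetP => u; rewrite !inE => vu.
have closed_class : closed (adjacent (monochromatic_edges E f)) [pred u | f u == f v].
  move=> x y; rewrite /adjacent inE => /andP[_]; rewrite monochromatic_pair => /eqP fxy.
  by rewrite !inE fxy.
by have := closed_connect closed_class vu; rewrite !inE eqxx => <-.
Qed.

Lemma largest_component_le_colour_class (R : realType) (K : finType) n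
    (E : {set {set 'I_n}}) (f : {ffun 'I_n -> K}) (B : R) :
  0 <= B -> (forall k, (#|[set v | f v == k]|)%:R <= B) ->
  (largest_component_size (monochromatic_edges E f))%:R <= B.
Proof.
move=> B_ge0 classB; rewrite /largest_component_size.
elim/big_ind: _ => // [x y xB yB | v _]; first by rewrite /maxn; case: ltnP.
by apply: le_trans (classB (f v)); rewrite ler_nat subset_leq_card ?component_sub_colour_class.
Qed.

Section GiantColouring.
Variables (R : realType) (r : nat) (c : R).

Definition giant_colour_weight (k : 'I_r.+1) : R := if (k < r)%N then c else 1 - r%:R * c.

Lemma sum_giant_colour_weight (F : R -> R) :
  \sum_k F (giant_colour_weight k) = r%:R * F c + F (1 - r%:R * c).
Proof.
rewrite big_ord_recr /= /giant_colour_weight ltnn.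
rewrite (eq_bigr (fun _ => F c)) => [|[i ir] _]; last by rewrite /= ir.
by rewrite sumr_const card_ord -[F c *+ r]mulr_natl.
Qed.

Lemma giant_colour_weight_sum1 : \sum_k giant_colour_weight k = 1.
Proof. by rewrite (sum_giant_colour_weight id) /=; ring. Qed.

Lemma giant_colour_weight_collision : \sum_k giant_colour_weight k ^+ 2 = collision_prob r c.
Proof. exact: (sum_giant_colour_weight (fun x => x ^+ 2)). Qed.

Lemma giant_colour_weight_ge0 (c_ge0 : 0 <= c) (rc_le1 : r%:R * c <= 1) k :
  0 <= giant_colour_weight k.
Proof. by rewrite /giant_colour_weight; case: ifP; rewrite // subr_ge0. Qed.

Lemma giant_colour_weight_le (rc_ge1 : 1 <= r.+1%:R * c) k : giant_colour_weight k <= c.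
Proof. by rewrite /giant_colour_weight; case: ifP => //; move: rc_ge1; rewrite -natr1; lra. Qed.

End GiantColouring.


Lemma giant_component_upper_whp (R : realType) (r : nat) (p : R)
    (H : forall n : nat, {set {set 'I_n}}) :
  (0 < r)%N -> 1 / r.+1%:R < p -> p <= 1 / r%:R ->
  (forall n, is_simple_graph (H n)) ->
  exists mu : forall n : nat, {ffun {set {set 'I_n}} -> R},
    (forall n, M1p (H n) p (mu n)) /\
    forall eps delta : R, 0 < eps -> 0 < delta ->
      exists N : nat, forall n : nat, (N <= n)%N ->
        1 - delta <= prob (mu n) (fun S =>
          (largest_component_size S)%:R <= (1 + eps) * giant_fraction r p * n%:R).
Proof.
move=> r_gt0 p_gt p_le simpleH.
have [rc_gt1 rc_le1 c_root] := giant_fraction_spec r_gt0 p_gt p_le.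
set c := giant_fraction r p in rc_gt1 rc_le1 c_root *.
have c_gt0 : 0 < c by rewrite -(pmulr_rgt0 _ (ltr0Sn _ r)) (lt_trans ltr01).
clearbody c.
pose w : 'I_r.+1 -> R := giant_colour_weight c.
have w_ge0 := giant_colour_weight_ge0 (ltW c_gt0) rc_le1.
have w_sum1 : \sum_k w k = 1 := giant_colour_weight_sum1 r c.
have w_le k : w k <= c by apply: giant_colour_weight_le; rewrite ltW.
exists (fun n => colouring_measure w (H n)); split.
  move=> n; rewrite -c_root -giant_colour_weight_collision.
  exact: colouring_measure_M1p.
move=> eps delta eps_gt0 delta_gt0.
pose B := r.+1%:R / (eps ^+ 2 * c ^+ 2 * delta).
exists (Num.truncn B).+1 => n Nn.
have Bn : B < n%:R by apply: lt_le_trans (truncnS_gt B) _; rewrite ler_nat.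
have n_gt0 : 0 < n%:R :> R.
  apply: (le_lt_trans _ Bn); apply: divr_ge0; first exact: ler0n.
  by rewrite !mulr_ge0 ?exprn_ge0 ?ltW.
pose t := eps * c * n%:R.
have t_gt0 : 0 < t by rewrite !mulr_gt0.
rewrite prob_colouring_measure.
have := chebyshev_lower_forall (colouring_weight_ge0 w_ge0) (sum_colouring_weight n w_sum1)
  (X := fun k f => (#|[set v | f v == k]|)%:R) (m := fun k => n%:R * w k) (V := fun=> n%:R)
  t_gt0 (colour_class_variance n w_ge0 w_sum1).
move=> tail; apply: le_trans (le_trans _ tail) _.
  rewrite lerD2l lerN2 sumr_const card_ord ler_pdivrMr ?exprn_gt0 //.
  move: Bn; rewrite ltr_pdivrMr ?mulr_gt0 ?exprn_gt0 // => Bn.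
  have -> : delta * t ^+ 2 = n%:R * (n%:R * (eps ^+ 2 * c ^+ 2 * delta)) by rewrite /t; ring.
  by rewrite -[_ *+ r.+1]mulr_natr; apply: ler_wpM2l; rewrite ?ler0n ?ltW.
apply: ler_sum_subset => [f /forallP classes|f _]; last exact: colouring_weight_ge0.
apply: largest_component_le_colour_class => [|k].
  by rewrite mulr_ge0 ?ler0n // mulr_ge0 ?ltW // addr_gt0 ?ltr01.
have := classes k; rewrite ltr_distl => /andP[_ /ltW class_le].
apply: le_trans class_le _; have := ler_wpM2l (ler0n R n) (w_le k).
by rewrite /t; lra.
Qed.


Unset Implicit Arguments. Set Strict Implicit. Set Printing Implicit Defensive.

Theorem theorem17 (R : realType) (r : nat) (p : R)
    (H : forall n : nat, {set {set 'I_n}}) (q : nat -> R) :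
  (0 < r)%N ->
  1 / (r.+1)%:R < p -> p <= 1 / r%:R ->
  (forall n, is_simple_graph (H n)) ->
  weakly_pseudorandom H q ->
  (* q(n) >> log(n)/n *)
  (forall M : R, exists N : nat, forall n : nat, (N <= n)%N ->
      M * ln (n%:R) <= q n * n%:R) ->
  let c := (1 + Num.sqrt (((r.+1)%:R * p - 1) / r%:R)) / (r.+1)%:R in
  (* (i) *)
  (forall eps delta : R, 0 < eps -> 0 < delta ->
     exists N : nat, forall n : nat, (N <= n)%N ->
       forall mu : {ffun {set {set 'I_n}} -> R}, M1p (H n) p mu ->
         1 - delta <= prob mu (fun S =>
           (1 - eps) * c * n%:R <= (largest_component_size S)%:R)) /\
  (* (ii) *)
  (exists mu : forall n : nat, {ffun {set {set 'I_n}} -> R},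
     (forall n, M1p (H n) p (mu n)) /\
     forall eps delta : R, 0 < eps -> 0 < delta ->
       exists N : nat, forall n : nat, (N <= n)%N ->
         1 - delta <= prob (mu n) (fun S =>
           (largest_component_size S)%:R <= (1 + eps) * c * n%:R)).
Proof.
move=> r_gt0 p_gt p_le simpleH pseudoH growth c; split.
  exact: giant_component_lower_whp r_gt0 p_gt p_le simpleH pseudoH growth.
exact: giant_component_upper_whp r_gt0 p_gt p_le simpleH.
Qed.
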